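(* If $\alpha\in\mathrm{Aut}^0A_\Gamma$, then for any $a,b\in X$, $\langle\alpha_*b,a\rangle\ne0$ implies $a=b$ or $a\ge b$.
   Context: $\Gamma$ is a finite simplicial graph with vertex set $X$, $A_\Gamma$ its right-angled Artin group, $H_\Gamma$ its abelianization with basis the images of $X$, and $\langle-,-\rangle$ the inner product on $H_\Gamma$ making this basis orthonormal; $\alpha_*$ is the induced automorphism of $H_\Gamma$ and $b$ also denotes the image of $b$. $\mathrm{lk}(v)$ = neighbours, $\mathrm{st}(v)=\mathrm{lk}(v)\cup\{v\}$; $v\ge w$ iff $\mathrm{lk}(w)\subset\mathrm{st}(v)$ (extended to letters of $X\cup X^{-1}$ via their vertices). $\mathrm{Aut}^0A_\Gamma$ is the subgroup of $\mathrm{Aut}\,A_\Gamma$ generated by: transvections $\tau_{u,v}$ ($u,v\in X^{\pm1}$, $u\ge v$, distinct vertices; $v\mapsto vu$, other generators fixed), partial conjugations $c_{u,Y}$ ($u\in X^{\pm1}$, $Y$ a union of connected components of $\Gamma$ minus $\mathrm{st}$ of the vertex of $u$; $y\mapsto u^{-1}yu$ for $y\in Y$, others fixed), and inversions ($x\mapsto x^{-1}$ for one $x\in X$). *)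

(* Right-angled Artin group A_Gamma on a finite simplicial graph
   Gamma = (T, e): vertex set X = T (a finType), e symmetric irreflexive.
   Elements of A_Gamma are represented by words in X^{+-1}; an endomorphism of
   A_Gamma is represented by the images of the generators (a map T -> word). *)
From HB Require Import structures.
From mathcomp Require Import all_boot all_order all_algebra.
Set Implicit Arguments. Unset Strict Implicit. Unset Printing Implicit Defensive.
Import GRing.Theory Num.Theory.
Local Open Scope ring_scope.

Section RAAG.
Variable T : finType.
Variable e : rel T.

Definition simplicial_graph := symmetric e /\ irreflexive e.

(* letters of X \cup X^{-1}: (x, false) = x, (x, true) = x^{-1} *)
Definition letter := (T * bool)%type.
Definition word := seq letter.
Definition lvert (u : letter) : T := u.1.
Definition linv (u : letter) : letter := (u.1, ~~ u.2).
Definition winv (w : word) : word := rev (map linv w).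

Definition lk (v : T) : {set T} := [set z | e v z].
Definition st (v : T) : {set T} := v |: lk v.

Definition vge (v w : T) : bool := lk w \subset st v.

Definition endo := T -> word.
Definition subst_letter (phi : endo) (u : letter) : word :=
  if u.2 then winv (phi u.1) else phi u.1.
Definition subst (phi : endo) (w : word) : word := flatten (map (subst_letter phi) w).
Definition id_endo : endo := fun x => [:: (x, false)].
Definition comp_endo (phi psi : endo) : endo := fun x => subst phi (psi x).

Inductive gen :=
  | Transv of letter & letter     (* tau_{u,v} : v |-> v u *)
  | PConj of letter & {set T}     (* c_{u,Y} : y |-> u^{-1} y u, y in Y *)
  | Inversion of T.

Definition union_of_components (w : T) (Y : {set T}) : bool :=
  (Y \subset ~: st w) &&
  [forall y in Y, forall z, (e y z && (z \notin st w)) ==> (z \in Y)].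

Definition valid_gen (g : gen) : bool :=
  match g with
  | Transv u v => (lvert u != lvert v) && vge (lvert u) (lvert v)
  | PConj u Y => union_of_components (lvert u) Y
  | Inversion _ => true
  end.

(* action of a generator on the generators x of A_Gamma.
   For tau_{u,v} with v = y^{-1}: y^{-1} |-> y^{-1} u, i.e. y |-> u^{-1} y. *)
Definition gen_endo (g : gen) : endo :=
  match g with
  | Transv u v => fun x =>
      if x == lvert v then
        (if v.2 then [:: linv u; (x, false)] else [:: (x, false); u])
      else [:: (x, false)]
  | PConj u Y => fun x =>
      if x \in Y then [:: linv u; (x, false); u] else [:: (x, false)]
  | Inversion y => fun x => if x == y then [:: (x, true)] else [:: (x, false)]
  end.

Definition endo_of_gens (gs : seq gen) : endo := foldr comp_endo id_endo (map gen_endo gs).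

(* The generating set
   is closed under inverses (tau_{u,v}^{-1} = tau_{u^{-1},v}, c_{u,Y}^{-1} =
   c_{u^{-1},Y}, inversions are involutions), so its elements are exactly the
   finite compositions of generators. *)
Definition in_Aut0 (alpha : endo) : Prop :=
  exists gs : seq gen, all valid_gen gs /\ alpha = endo_of_gens gs.

(* abelianization H_Gamma = Z^X with orthonormal basis the images of X *)
Definition HG := {ffun T -> int}.
Definition basis_vec (x : T) : HG := [ffun y => (y == x)%:Z].
Definition abel (w : word) : HG :=
  [ffun y => \sum_(u <- w | u.1 == y) (if u.2 then -1 else 1)].
Definition alpha_star (alpha : endo) (h : HG) : HG :=
  [ffun y => \sum_(x : T) h x * abel (alpha x) y].
Definition inner (h k : HG) : int := \sum_(x : T) h x * k x.

End RAAG.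

(* Call phi triangular when a generator a can have nonzero exponent sum in
   phi b only if a >= b.  Each generator of Aut^0 is triangular: a transvection
   tau_{u,v} only adds letters of u >= v, the two letters added by a partial
   conjugation cancel in the exponent sum, and inversions only change signs.
   The exponent sums of a composition multiply as matrices, so a nonzero entry
   of a product passes through some x with a >= x >= b; as >= is transitive
   when adjacency is symmetric, every element of Aut^0 is triangular, and
   <alpha_* b, a> is the exponent sum of a in alpha b. *)
From mathcomp Require Import all_boot all_order all_algebra.
Local Open Scope ring_scope.
Import GRing.Theory.

Section Abelianization.
Variable T : finType.

Definition lsign (u : letter T) : int := if u.2 then -1 else 1.

Lemma abelE (w : word T) y : abel w y = \sum_(u <- w | u.1 == y) lsign u.
Proof. by rewrite ffunE. Qed.

Lemma abel_nil y : abel ([::] : word T) y = 0.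
Proof. by rewrite abelE big_nil. Qed.

Lemma abel_cons (u : letter T) w y :
  abel (u :: w) y = (u.1 == y)%:R * lsign u + abel w y.
Proof. by rewrite !abelE big_cons; case: eqP; rewrite ?mul1r ?mul0r ?add0r. Qed.

Lemma abel_cat (w1 w2 : word T) y : abel (w1 ++ w2) y = abel w1 y + abel w2 y.
Proof. by rewrite !abelE big_cat. Qed.

Lemma abel_winv (w : word T) y : abel (winv w) y = - abel w y.
Proof.
rewrite !abelE big_rev big_map -sumrN.
by apply: eq_bigr => u _; rewrite /lsign /=; case: u.2; rewrite ?opprK.
Qed.

Lemma abel_conj_letter (u v : letter T) y :
  abel [:: linv u; v; u] y = abel [:: v] y.
Proof.
rewrite !abel_cons abel_nil /= !addr0 addrCA -mulrDr /lsign /=.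
by case: u.2; rewrite ?subrr ?addNr mulr0 addr0.
Qed.

Lemma abel_neq0_has (w : word T) a :
  abel w a != 0 -> has (fun u => u.1 == a) w.
Proof.
elim: w => [|u w IH]; first by rewrite abel_nil eqxx.
by rewrite abel_cons /=; case: (u.1 == a); rewrite ?mul0r ?add0r.
Qed.

Lemma abel_subst (phi : endo T) (w : word T) y :
  abel (subst phi w) y = \sum_x abel w x * abel (phi x) y.
Proof.
elim: w => [|u w IH].
  by rewrite abel_nil big1 // => x _; rewrite abel_nil mul0r.
rewrite /subst /= abel_cat -/(subst phi w) IH.
under [RHS]eq_bigr => x _ do rewrite abel_cons mulrDl.
rewrite big_split /=; congr (_ + _).
rewrite (bigD1 u.1) //= eqxx mul1r big1 ?addr0; last first.
  by move=> x /negPf ux; rewrite eq_sym ux !mul0r.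
by rewrite /subst_letter /lsign; case: u.2; rewrite ?abel_winv ?mulN1r ?mul1r.
Qed.

Lemma inner_alpha_star_basis (alpha : endo T) a b :
  inner (alpha_star alpha (basis_vec b)) (basis_vec a) = abel (alpha b) a.
Proof.
rewrite /inner (bigD1 a) //= big1 ?addr0; last first.
  by move=> x /negPf xa; rewrite [basis_vec a x]ffunE xa mulr0.
rewrite [alpha_star _ _ _]ffunE [basis_vec a a]ffunE eqxx mulr1.
rewrite (bigD1 b) //= big1 ?addr0; last first.
  by move=> x /negPf xb; rewrite ffunE xb mul0r.
by rewrite ffunE eqxx mul1r.
Qed.

End Abelianization.

Section Domination.
Variable T : finType.
Variable e : rel T.

Lemma stP v x : reflect (x = v \/ x \in lk e v) (x \in st e v).
Proof. exact: setU1P. Qed.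

Lemma st_self v : v \in st e v.
Proof. exact: setU11. Qed.

Lemma lk_st v x : x \in lk e v -> x \in st e v.
Proof. exact: setU1r. Qed.

Lemma vge_refl : reflexive (vge e).
Proof. by move=> v; apply/subsetP => x; apply: lk_st. Qed.

Lemma mem_lk_sym : symmetric e -> forall x y, (x \in lk e y) = (y \in lk e x).
Proof. by move=> esym x y; rewrite !inE esym. Qed.

(* If t lies in lk z, then t lies in st y; the only nontrivial case is t = y,
   where symmetry turns y \in lk z into z \in lk y \subset st x. *)
Lemma vge_trans : symmetric e -> transitive (vge e).
Proof.
move=> esym y x z /subsetP lk_y_st_x /subsetP lk_z_st_y.
apply/subsetP => t t_lk_z.
case/stP: (lk_z_st_y t t_lk_z) => [ty | ]; last exact: lk_y_st_x.
subst t; have z_lk_y : z \in lk e y by rewrite mem_lk_sym.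
case/stP: (lk_y_st_x z z_lk_y) => [zx | z_lk_x].
  by subst z; apply: lk_st.
have x_lk_z : x \in lk e z by rewrite mem_lk_sym.
case/stP: (lk_z_st_y x x_lk_z) => [-> | x_lk_y]; first exact: st_self.
by apply: lk_st; rewrite mem_lk_sym.
Qed.

Definition vge_triangular (phi : endo T) :=
  forall a b, abel (phi b) a != 0 -> vge e a b.

Lemma abel_neq0_vge (w : word T) a b :
  all (fun u => vge e u.1 b) w -> abel w a != 0 -> vge e a b.
Proof. by move=> /allP w_ge /abel_neq0_has /hasP [u /w_ge u_ge /eqP <-]. Qed.

Lemma vge_triangular_id : vge_triangular (@id_endo T).
Proof. by move=> a b; apply: abel_neq0_vge; rewrite /= vge_refl. Qed.

Lemma vge_triangular_gen g : valid_gen e g -> vge_triangular (gen_endo g).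
Proof.
case: g => [u v | u Y | y] /= g_valid a b.
- case: (eqVneq b (lvert v)) => [bv | _];
    last by apply: abel_neq0_vge; rewrite /= vge_refl.
  have u_ge_b : vge e u.1 b by rewrite bv; case/andP: g_valid.
  by apply: abel_neq0_vge; case: v.2; rewrite /= vge_refl u_ge_b.
- case: ifP => _; rewrite ?abel_conj_letter;
  by apply: abel_neq0_vge; rewrite /= vge_refl.
- by case: ifP => _; apply: abel_neq0_vge; rewrite /= vge_refl.
Qed.

Lemma vge_triangular_comp phi psi : symmetric e ->
  vge_triangular phi -> vge_triangular psi -> vge_triangular (comp_endo phi psi).
Proof.
move=> esym phi_tri psi_tri a b; rewrite /comp_endo abel_subst.
have [x /andP [psi_bx phi_xa] _ | no_x] :=
  pickP (fun x => (abel (psi b) x != 0) && (abel (phi x) a != 0)).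
  exact: vge_trans esym _ _ _ (phi_tri _ _ phi_xa) (psi_tri _ _ psi_bx).
rewrite big1 ?eqxx // => x _; apply/eqP.
by rewrite mulf_eq0 -[_ || _]negbK negb_or no_x.
Qed.

Lemma vge_triangular_endo_of_gens gs : symmetric e ->
  all (valid_gen e) gs -> vge_triangular (endo_of_gens gs).
Proof.
move=> esym; elim: gs => [_ | g gs IH /andP [g_valid gs_valid]] /=.
  exact: vge_triangular_id.
by apply: vge_triangular_comp => //; [apply: vge_triangular_gen | apply: IH].
Qed.

End Domination.

Theorem lemma4p6 (T : finType) (e : rel T) (Hgraph : simplicial_graph e)
  (alpha : endo T) (Halpha : in_Aut0 e alpha) (a b : T) :
  inner (alpha_star alpha (basis_vec b)) (basis_vec a) != 0 ->
  a = b \/ vge e a b.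
Proof.
have [gs [gs_valid ->]] := Halpha.
rewrite inner_alpha_star_basis => abel_ab; right.
exact: vge_triangular_endo_of_gens Hgraph.1 gs_valid a b abel_ab.
Qed.
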